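(* Let $R$ be a commutative elementary divisor domain and $A,B\in M_2(R)$. Let $P_A,P_B,Q_A,Q_B\in GL_2(R)$ with $P_AAQ_A=E=\mathrm{diag}(\varepsilon_1,\varepsilon_2)$ and $P_BBQ_B=\Delta=\mathrm{diag}(\delta_1,\delta_2)$ $d$-matrices, and write $P_BP_A^{-1}=(s_{ij})_{i,j=1}^2$. Then the element $\big((\varepsilon_2,\delta_2),\,s_{21}[\varepsilon_1,\delta_1]\big)$ does not depend (up to a unit factor) on the choice of $P_A,P_B$, and a left greatest common divisor $(A,B)_l$ of $A$ and $B$ is equivalent to the $d$-matrix $$\mathrm{diag}\Big((\varepsilon_1,\delta_1),\ \big(\varepsilon_2,\delta_2,[\varepsilon_1,\delta_1]s_{21}\big)\Big).$$
   Context: An elementary divisor domain: a commutative integral domain over which every matrix is equivalent ($PAQ$, $P,Q$ invertible) to a $d$-matrix, i.e. a diagonal matrix $\mathrm{diag}(\varphi_1,\dots)$ with $\varphi_i\mid\varphi_{i+1}$; it is in particular a Bezout domain. $(a,b,\dots)$ denotes a greatest common divisor and $[a,b]$ a least common multiple (with $(a,0)=a$, $[a,0]=0$), both defined up to unit factors. $D$ is a left greatest common divisor of $A,B$ if $A=DA_1$, $B=DB_1$ for some matrices $A_1,B_1$ and every $D'$ with this property is a left divisor of $D$ ($D=D'C$ for some $C$). *)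

From HB Require Import structures.
From mathcomp Require Import all_boot all_order all_algebra.
Set Implicit Arguments. Unset Strict Implicit. Unset Printing Implicit Defensive.
Import GRing.Theory.
Local Open Scope ring_scope.

Definition rdvd (R : comRingType) (a b : R) : Prop := exists c : R, b = a * c.

Definition rassoc (R : comUnitRingType) (a b : R) : Prop :=
  exists u : R, u \is a GRing.unit /\ b = u * a.

Definition is_gcd (R : comRingType) (s : seq R) (g : R) : Prop :=
  (forall x, x \in s -> rdvd g x) /\
  (forall d : R, (forall x, x \in s -> rdvd d x) -> rdvd d g).

Definition is_lcm (R : comRingType) (a b l : R) : Prop :=
  rdvd a l /\ rdvd b l /\ (forall m : R, rdvd a m -> rdvd b m -> rdvd l m).

Definition is_dmatrix (R : comRingType) (m n : nat) (M : 'M[R]_(m, n)) : Prop :=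
  (forall (i : 'I_m) (j : 'I_n), (i : nat) <> j -> M i j = 0) /\
  (forall (i i' : 'I_m) (j j' : 'I_n),
      (i : nat) = j -> (i' : nat) = j' -> (i <= i')%N -> rdvd (M i j) (M i' j')).

Definition mx_equiv (R : comUnitRingType) (m n : nat)
  (A N : 'M[R]_(m, n)) : Prop :=
  exists (P : 'M[R]_m) (Q : 'M[R]_n),
    P \in unitmx /\ Q \in unitmx /\ P *m A *m Q = N.

Definition elementary_divisor_domain (R : idomainType) : Prop :=
  forall (m n : nat) (A : 'M[R]_(m, n)),
    exists (P : 'M[R]_m) (Q : 'M[R]_n),
      P \in unitmx /\ Q \in unitmx /\ is_dmatrix (P *m A *m Q).

Definition diag2 (R : comRingType) (a b : R) : 'M[R]_2 :=
  \matrix_(i < 2, j < 2)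
     (if i == j then (if (i : nat) == 0%N then a else b) else 0).

(* the (2,1) entry of a 2x2 matrix (row 2, column 1 in 1-based indexing) *)
Definition entry21 (R : comRingType) (M : 'M[R]_2) : R := M (inord 1) (inord 0).

Definition mx_ldvd (R : comRingType) (n : nat) (D A : 'M[R]_n) : Prop :=
  exists A1 : 'M[R]_n, A = D *m A1.

Definition is_lgcd (R : comRingType) (n : nat) (A B D : 'M[R]_n) : Prop :=
  mx_ldvd D A /\ mx_ldvd D B /\
  (forall D' : 'M[R]_n, mx_ldvd D' A -> mx_ldvd D' B -> mx_ldvd D' D).

From HB Require Import structures.
From mathcomp Require Import all_boot all_order all_algebra.
From mathcomp Require Import ring.
Set Implicit Arguments. Unset Strict Implicit. Unset Printing Implicit Defensive.
Import GRing.Theory.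
Local Open Scope ring_scope.

(* Put N := [A | B], a 2 x 4 matrix.  Its content (gcd of the
   entries) and its 2 x 2 determinantal divisor (gcd of the 2 x 2 minors) are
   invariant under N |-> P N Q, and PB N diag(QA, QB) = [S E | Delta] with
   S = PB PA^-1.  Computing the minors of [S E | Delta] shows that the content
   is h1 = (e1, d1) and the determinantal divisor is h1 h2 with
   h2 = (e2, d2, [e1, d1] s21); this gives the independence claim after
   cancelling h1.  A left gcd D of A and B satisfies D = N X and N = D Y (a
   common left divisor of the form N X is read off the Smith form of N), so D
   has content h1 and determinant h1 h2, which pins down its Smith form. *)

Notation i0 := (@inord 1 0).
Notation i1 := (@inord 1 1).

Lemma ord2P (i : 'I_2) : i = i0 \/ i = i1.
Proof.
by case: i => [[|[|k]] lt_i2]; [left | right | by []]; apply: val_inj; rewrite /= inordK.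
Qed.

Lemma eq_i0_i1 : (i0 == i1) = false.
Proof. by rewrite -val_eqE /= !inordK. Qed.

Lemma eq_i1_i0 : (i1 == i0) = false.
Proof. by rewrite -val_eqE /= !inordK. Qed.

Lemma big_ord2 (V : nmodType) (F : 'I_2 -> V) : \sum_(i < 2) F i = F i0 + F i1.
Proof.
rewrite big_ord_recl big_ord1.
by congr (F _ + F _); apply: val_inj; rewrite /= inordK.
Qed.

Section TwoByTwo.

Variable R : comRingType.

Lemma det2 (M : 'M[R]_2) : \det M = M i0 i0 * M i1 i1 - M i0 i1 * M i1 i0.
Proof.
rewrite (expand_det_row M i0) big_ord2 /cofactor !det_mx11 !mxE !inordK //.
have -> : (lift i0 0 : 'I_2) = i1 by apply: val_inj; rewrite /= !inordK.
have -> : (lift i1 0 : 'I_2) = i0 by apply: val_inj; rewrite /= !inordK.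
by rewrite /= expr0 expr1; ring.
Qed.

Lemma diag2_00 (a b : R) : diag2 a b i0 i0 = a.
Proof. by rewrite mxE eqxx inordK. Qed.
Lemma diag2_01 (a b : R) : diag2 a b i0 i1 = 0.
Proof. by rewrite mxE eq_i0_i1. Qed.
Lemma diag2_10 (a b : R) : diag2 a b i1 i0 = 0.
Proof. by rewrite mxE eq_i1_i0. Qed.
Lemma diag2_11 (a b : R) : diag2 a b i1 i1 = b.
Proof. by rewrite mxE eqxx inordK. Qed.

Definition diag2E := (diag2_00, diag2_01, diag2_10, diag2_11).

Lemma mulmx_diag2_col0 (S : 'M[R]_2) a b i : (S *m diag2 a b) i i0 = S i i0 * a.
Proof. by rewrite mxE big_ord2 !diag2E; ring. Qed.

Lemma mulmx_diag2_col1 (S : 'M[R]_2) a b i : (S *m diag2 a b) i i1 = S i i1 * b.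
Proof. by rewrite mxE big_ord2 !diag2E; ring. Qed.

Lemma diag2_mul (a b a' b' : R) : diag2 a b *m diag2 a' b' = diag2 (a * a') (b * b').
Proof.
apply/matrixP => i j; rewrite mxE big_ord2.
by case: (ord2P i) => ->; case: (ord2P j) => ->; rewrite !diag2E; ring.
Qed.

End TwoByTwo.

Lemma diag2_unitmx (R : comUnitRingType) (a b : R) :
  a \is a GRing.unit -> b \is a GRing.unit -> diag2 a b \in unitmx.
Proof. by move=> ua ub; rewrite unitmxE det2 !diag2E mulr0 subr0 unitrM ua ub. Qed.

Section Divisibility.

Variable R : comRingType.
Implicit Types a b c d x : R.

Lemma rdvd_refl d : rdvd d d. Proof. by exists 1; rewrite mulr1. Qed.
Lemma rdvd0 d : rdvd d 0. Proof. by exists 0; rewrite mulr0. Qed.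

Lemma rdvd_trans a b c : rdvd a b -> rdvd b c -> rdvd a c.
Proof. by move=> [x ->] [y ->]; exists (x * y); rewrite mulrA. Qed.

Lemma rdvd_mulr d a b : rdvd d a -> rdvd d (a * b).
Proof. by move=> [x ->]; exists (x * b); rewrite mulrA. Qed.

Lemma rdvd_mull d a b : rdvd d b -> rdvd d (a * b).
Proof. by rewrite mulrC; apply: rdvd_mulr. Qed.

Lemma rdvd_mul2 d d' a b : rdvd d a -> rdvd d' b -> rdvd (d * d') (a * b).
Proof. by move=> [x ->] [y ->]; exists (x * y); ring. Qed.

Lemma rdvdD d a b : rdvd d a -> rdvd d b -> rdvd d (a + b).
Proof. by move=> [x ->] [y ->]; exists (x + y); ring. Qed.

Lemma rdvdN d a : rdvd d a -> rdvd d (- a).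
Proof. by move=> [x ->]; exists (- x); ring. Qed.

Lemma rdvd_lincomb d a b p q : rdvd d a -> rdvd d b -> rdvd d (a * p + b * q).
Proof. by move=> da db; apply: rdvdD; apply: rdvd_mulr. Qed.

Lemma rdvd_sum d (I : Type) (r : seq I) (P : pred I) (F : I -> R) :
  (forall i, P i -> rdvd d (F i)) -> rdvd d (\sum_(i <- r | P i) F i).
Proof.
move=> dF; apply: (big_rec (rdvd d)); first exact: rdvd0.
by move=> i x Pi dx; apply: rdvdD => //; apply: dF.
Qed.

Lemma is_gcd2P a b g : is_gcd [:: a; b] g <->
  [/\ rdvd g a, rdvd g b & forall d, rdvd d a -> rdvd d b -> rdvd d g].
Proof.
split=> [[gs gmax] | [ga gb gmax]].
  split; [apply: gs | apply: gs | ]; rewrite ?inE ?eqxx ?orbT //.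
  by move=> d da db; apply: gmax => x; rewrite !inE => /orP[] /eqP ->.
split; first by move=> x; rewrite !inE => /orP[] /eqP ->.
by move=> d ds; apply: gmax; apply: ds; rewrite !inE eqxx ?orbT.
Qed.

Lemma is_gcd3P a b c g : is_gcd [:: a; b; c] g <->
  [/\ rdvd g a, rdvd g b, rdvd g c &
      forall d, rdvd d a -> rdvd d b -> rdvd d c -> rdvd d g].
Proof.
split=> [[gs gmax] | [ga gb gc gmax]].
  split; [apply: gs | apply: gs | apply: gs | ]; rewrite ?inE ?eqxx ?orbT //.
  by move=> d da db dc; apply: gmax => x; rewrite !inE => /orP[/eqP -> | /orP[] /eqP ->].
split; first by move=> x; rewrite !inE => /orP[/eqP -> | /orP[] /eqP ->].
by move=> d ds; apply: gmax; apply: ds; rewrite !inE eqxx ?orbT.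
Qed.

Lemma is_gcd2_dvdP a b g d : is_gcd [:: a; b] g -> rdvd d a /\ rdvd d b <-> rdvd d g.
Proof.
move/is_gcd2P=> [ga gb gmax]; split=> [[da db] | dg]; first exact: gmax.
by split; apply: rdvd_trans dg _.
Qed.

Lemma is_gcd_nested a b c g h :
  is_gcd [:: a; b] g -> is_gcd [:: g; c] h -> is_gcd [:: a; b; c] h.
Proof.
move=> /is_gcd2P[ga gb gmax] /is_gcd2P[hg hc hmax].
apply/is_gcd3P; split; [exact: rdvd_trans hg ga | exact: rdvd_trans hg gb | by [] |].
by move=> d da db dc; apply: hmax => //; apply: gmax.
Qed.

Lemma gcd_mul_lcm_dvd a b g l : rdvd g a -> rdvd g b -> is_lcm a b l ->
  rdvd (g * l) (a * b).
Proof.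
move=> [a' Ea] [b' Eb] [_ [_ lmin]].
have [m Em] : rdvd l (a * b').
  by apply: lmin; [exists b' | exists a'; rewrite Eb Ea; ring].
by exists m; rewrite [in LHS]Eb mulrCA Em; ring.
Qed.

Lemma gcd_dvd_invariant e1 e2 d1 d2 l s h1 h2 : rdvd e1 e2 -> rdvd d1 d2 ->
  is_lcm e1 d1 l -> is_gcd [:: e1; d1] h1 -> is_gcd [:: e2; d2; l * s] h2 ->
  rdvd h1 h2.
Proof.
move=> he hd [e1l _] /is_gcd2P[h1e1 h1d1 _] /is_gcd3P[_ _ _ h2max].
apply: h2max; [exact: rdvd_trans h1e1 he | exact: rdvd_trans h1d1 hd |].
exact/rdvd_mulr/(rdvd_trans h1e1 e1l).
Qed.

End Divisibility.

Section Associates.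

Variable R : idomainType.
Implicit Types a b c : R.

Lemma rassoc_refl a : rassoc a a.
Proof. by exists 1; rewrite unitr1 mul1r. Qed.

Lemma rassoc_sym a b : rassoc a b -> rassoc b a.
Proof.
move=> [u [uu ->]]; exists u^-1; split; first by rewrite unitrV.
by rewrite mulrA mulVr // mul1r.
Qed.

Lemma rassoc_trans a b c : rassoc a b -> rassoc b c -> rassoc a c.
Proof.
move=> [u [uu ->]] [v [uv ->]]; exists (v * u).
by rewrite unitrM uu uv mulrA.
Qed.

Lemma rassoc_mul a b a' b' : rassoc a a' -> rassoc b b' -> rassoc (a * b) (a' * b').
Proof.
move=> [u [uu ->]] [v [uv ->]]; exists (u * v); split; first by rewrite unitrM uu uv.
by ring.
Qed.

Lemma rassoc_rdvd a b : rassoc a b -> rdvd a b.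
Proof. by move=> [u [_ ->]]; exists u; rewrite mulrC. Qed.

Lemma rdvd_anti a b : rdvd a b -> rdvd b a -> rassoc a b.
Proof.
move=> [x Eb] [y Ea].
have [a0 | a_neq0] := eqVneq a 0.
  by rewrite Eb a0 mul0r; apply: rassoc_refl.
have xy1 : x * y = 1 by apply: (mulfI a_neq0); rewrite mulr1 mulrA -Eb -Ea.
exists x; split; last by rewrite Eb mulrC.
by apply/unitrP; exists y; rewrite mulrC xy1.
Qed.

(* When a = 0 both b and c vanish, so no hypothesis a != 0 is needed. *)
Lemma rassoc_mul2l a b c : rdvd a b -> rdvd a c ->
  rassoc (a * b) (a * c) -> rassoc b c.
Proof.
move=> [x Eb] [y Ec] [u [uu Eac]].
have [a0 | a_neq0] := eqVneq a 0.
  by rewrite Eb Ec a0 !mul0r; apply: rassoc_refl.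
by exists u; split=> //; apply: (mulfI a_neq0); rewrite Eac mulrCA.
Qed.

End Associates.

Lemma mx_equiv_trans (R : comUnitRingType) m n (A B C : 'M[R]_(m, n)) :
  mx_equiv A B -> mx_equiv B C -> mx_equiv A C.
Proof.
move=> [P [Q [uP [uQ <-]]]] [P' [Q' [uP' [uQ' <-]]]].
exists (P' *m P), (Q *m Q'); rewrite !unitmx_mul uP uQ uP' uQ'.
by do 2!split=> //; rewrite !mulmxA.
Qed.

Lemma mx_equiv_diag2 (R : idomainType) (a b a' b' : R) :
  rassoc a a' -> rassoc b b' -> mx_equiv (diag2 a b) (diag2 a' b').
Proof.
move=> [u [uu ->]] [v [uv ->]]; exists (diag2 u v), 1%:M.
by rewrite diag2_unitmx // unitmx1 mulmx1 diag2_mul.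
Qed.

Section Minors.

Variable R : comRingType.
Implicit Types d x : R.

Definition minor2 n (N : 'M[R]_(2, n)) (a b : 'I_n) : R :=
  N i0 a * N i1 b - N i0 b * N i1 a.

Definition dvd_entries m n d (N : 'M[R]_(m, n)) := forall i j, rdvd d (N i j).

Definition dvd_minors n d (N : 'M[R]_(2, n)) := forall a b, rdvd d (minor2 N a b).

Definition gcd_minors n (N : 'M[R]_(2, n)) g :=
  dvd_minors g N /\ forall x, dvd_minors x N -> rdvd x g.

Lemma minor2_mull n (P : 'M[R]_2) (N : 'M[R]_(2, n)) a b :
  minor2 (P *m N) a b = \det P * minor2 N a b.
Proof. by rewrite /minor2 det2 !mxE !big_ord2; ring. Qed.

(* Cauchy-Binet for 2 x 2 minors. *)
Lemma minor2_mulr n k (N : 'M[R]_(2, n)) (C : 'M[R]_(n, k)) a b :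
  minor2 (N *m C) a b = \sum_i \sum_j minor2 N i j * (C i a * C j b).
Proof.
rewrite /minor2 !mxE.
have sum_mul (u v : 'I_n -> R) :
    (\sum_i u i) * (\sum_j v j) = \sum_i \sum_j u i * v j.
  by rewrite mulr_suml; apply: eq_bigr => i _; rewrite mulr_sumr.
rewrite !sum_mul.
have -> : \sum_i \sum_j (N i0 i * N i1 j - N i0 j * N i1 i) * (C i a * C j b)
  = \sum_i \sum_j (N i0 i * N i1 j * (C i a * C j b))
    - \sum_i \sum_j (N i0 j * N i1 i * (C i a * C j b)).
  rewrite -sumrB; apply: eq_bigr => i _; rewrite -sumrB.
  by apply: eq_bigr => j _; ring.
congr (_ - _); first by apply: eq_bigr => i _; apply: eq_bigr => j _; ring.
rewrite [RHS]exchange_big /=.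
by apply: eq_bigr => i _; apply: eq_bigr => j _; ring.
Qed.

Lemma dvd_entries_mull m n p d (X : 'M[R]_(p, m)) (N : 'M[R]_(m, n)) :
  dvd_entries d N -> dvd_entries d (X *m N).
Proof. by move=> dN i j; rewrite mxE; apply: rdvd_sum => k _; apply: rdvd_mull. Qed.

Lemma dvd_entries_mulr m n p d (Y : 'M[R]_(n, p)) (N : 'M[R]_(m, n)) :
  dvd_entries d N -> dvd_entries d (N *m Y).
Proof. by move=> dN i j; rewrite mxE; apply: rdvd_sum => k _; apply: rdvd_mulr. Qed.

Lemma dvd_minors_mull n d (P : 'M[R]_2) (N : 'M[R]_(2, n)) :
  dvd_minors d N -> dvd_minors d (P *m N).
Proof. by move=> dN a b; rewrite minor2_mull; apply: rdvd_mull. Qed.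

Lemma dvd_minors_mulr n k d (C : 'M[R]_(n, k)) (N : 'M[R]_(2, n)) :
  dvd_minors d N -> dvd_minors d (N *m C).
Proof.
move=> dN a b; rewrite minor2_mulr.
by apply: rdvd_sum => i _; apply: rdvd_sum => j _; apply: rdvd_mulr.
Qed.

Lemma dvd_entries_row_mx m n1 n2 d (M1 : 'M[R]_(m, n1)) (M2 : 'M[R]_(m, n2)) :
  dvd_entries d (row_mx M1 M2) <-> dvd_entries d M1 /\ dvd_entries d M2.
Proof.
split=> [dM | [dM1 dM2] i j].
  by split=> i j; [rewrite -(row_mxEl M1 M2) | rewrite -(row_mxEr M1 M2)].
by rewrite -[j]splitK; case: (split j) => j' /=; rewrite ?row_mxEl ?row_mxEr.
Qed.

Lemma dvd_entries_diag2 d a b : dvd_entries d (diag2 a b) <-> rdvd d a /\ rdvd d b.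
Proof.
split=> [dD | [da db] i j].
  by split; [rewrite -(diag2_00 a b) | rewrite -(diag2_11 a b)].
by case: (ord2P i) => ->; case: (ord2P j) => ->; rewrite !diag2E //; apply: rdvd0.
Qed.

Lemma minor2_row_mx_ll n1 n2 (M1 : 'M[R]_(2, n1)) (M2 : 'M[R]_(2, n2)) i j :
  minor2 (row_mx M1 M2) (lshift n2 i) (lshift n2 j) = minor2 M1 i j.
Proof. by rewrite /minor2 !row_mxEl. Qed.

Lemma minor2_row_mx_lr n1 n2 (M1 : 'M[R]_(2, n1)) (M2 : 'M[R]_(2, n2)) i j :
  minor2 (row_mx M1 M2) (lshift n2 i) (rshift n1 j) =
  M1 i0 i * M2 i1 j - M2 i0 j * M1 i1 i.
Proof. by rewrite /minor2 !row_mxEl !row_mxEr. Qed.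

Lemma minor2_row_mx_rr n1 n2 (M1 : 'M[R]_(2, n1)) (M2 : 'M[R]_(2, n2)) i j :
  minor2 (row_mx M1 M2) (rshift n1 i) (rshift n1 j) = minor2 M2 i j.
Proof. by rewrite /minor2 !row_mxEr. Qed.

Lemma minor2_det (M : 'M[R]_2) : minor2 M i0 i1 = \det M.
Proof. by rewrite det2. Qed.

Lemma minor2_diag n (M : 'M[R]_(2, n)) i : minor2 M i i = 0.
Proof. by rewrite /minor2; ring. Qed.

Lemma minor2_swap n (M : 'M[R]_(2, n)) i j : minor2 M j i = - minor2 M i j.
Proof. by rewrite /minor2; ring. Qed.

Lemma dvd_minors_row_mx d (M1 M2 : 'M[R]_2) :
  rdvd d (\det M1) -> rdvd d (\det M2) ->
  (forall i j, rdvd d (minor2 (row_mx M1 M2) (lshift 2 i) (rshift 2 j))) ->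
  dvd_minors d (row_mx M1 M2).
Proof.
have dvd_minor2 (M : 'M[R]_2) i j : rdvd d (\det M) -> rdvd d (minor2 M i j).
  rewrite det2 => dM.
  case: (ord2P i) => ->; case: (ord2P j) => ->; rewrite ?minor2_diag; try exact: rdvd0.
    exact: dM.
  by rewrite minor2_swap; apply: rdvdN.
move=> dM1 dM2 dM12 a b.
rewrite -[a]splitK -[b]splitK; case: (split a) => a'; case: (split b) => b' /=.
- by rewrite minor2_row_mx_ll; apply: dvd_minor2.
- exact: dM12.
- by rewrite minor2_swap; apply/rdvdN/dM12.
- by rewrite minor2_row_mx_rr; apply: dvd_minor2.
Qed.

Lemma dvd_entries_mutual m n p d (D : 'M[R]_(m, p)) (N : 'M[R]_(m, n)) X Y :
  D = N *m X -> N = D *m Y -> dvd_entries d D <-> dvd_entries d N.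
Proof. by move=> ED EN; split=> dvd; [rewrite EN | rewrite ED]; apply: dvd_entries_mulr. Qed.

Lemma gcd_minors_mutual n (D : 'M[R]_2) (N : 'M[R]_(2, n)) X Y :
  D = N *m X -> N = D *m Y -> gcd_minors N (\det D).
Proof.
move=> ED EN; split=> [a b | x dx]; first by rewrite EN minor2_mull; apply/rdvd_mulr/rdvd_refl.
by rewrite -minor2_det ED; apply: dvd_minors_mulr.
Qed.

End Minors.

Section MinorsInvariance.

Variable R : comUnitRingType.

Lemma unitmx_sandwich m n (P : 'M[R]_m) (Q : 'M[R]_n) (N : 'M[R]_(m, n)) :
  P \in unitmx -> Q \in unitmx -> N = invmx P *m (P *m N *m Q) *m invmx Q.
Proof. by move=> uP uQ; rewrite mulmxA mulKmx // mulmxK. Qed.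

Lemma dvd_entries_equiv m n d (P : 'M[R]_m) (Q : 'M[R]_n) (N : 'M[R]_(m, n)) :
  P \in unitmx -> Q \in unitmx -> dvd_entries d (P *m N *m Q) <-> dvd_entries d N.
Proof.
move=> uP uQ; split=> dN; last by apply: dvd_entries_mulr; apply: dvd_entries_mull.
by rewrite (unitmx_sandwich N uP uQ); apply: dvd_entries_mulr; apply: dvd_entries_mull.
Qed.

Lemma gcd_minors_equiv n g (P : 'M[R]_2) (Q : 'M[R]_n) (N : 'M[R]_(2, n)) :
  P \in unitmx -> Q \in unitmx -> gcd_minors (P *m N *m Q) g -> gcd_minors N g.
Proof.
have dvd_minors_equiv x : P \in unitmx -> Q \in unitmx ->
    dvd_minors x (P *m N *m Q) <-> dvd_minors x N.
  move=> uP uQ; split=> dN; last by apply: dvd_minors_mulr; apply: dvd_minors_mull.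
  by rewrite (unitmx_sandwich N uP uQ); apply: dvd_minors_mulr; apply: dvd_minors_mull.
move=> uP uQ [dg gmax]; split=> [| x dx]; first by rewrite -(dvd_minors_equiv g uP uQ).
by apply: gmax; rewrite dvd_minors_equiv.
Qed.

Lemma row_mx_normal_form n (A B PA QA PB QB E Delta : 'M[R]_n) :
  PA \in unitmx -> PA *m A *m QA = E -> PB *m B *m QB = Delta ->
  PB *m row_mx A B *m block_mx QA 0 0 QB = row_mx (PB *m invmx PA *m E) Delta.
Proof.
move=> uPA <- <-.
by rewrite mul_mx_row mul_row_block !mulmx0 addr0 add0r !mulmxA mulmxKV.
Qed.

Lemma dvd_entries_row_mx_normal (A B PA QA PB QB : 'M[R]_2) e1 e2 d1 d2 d :
  PA \in unitmx -> QA \in unitmx -> PB \in unitmx -> QB \in unitmx ->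
  PA *m A *m QA = diag2 e1 e2 -> PB *m B *m QB = diag2 d1 d2 ->
  rdvd e1 e2 -> rdvd d1 d2 ->
  dvd_entries d (row_mx A B) <-> rdvd d e1 /\ rdvd d d1.
Proof.
move=> uPA uQA uPB uQB EA EB he hd.
have uS : PB *m invmx PA \in unitmx by rewrite unitmx_mul uPB unitmx_inv.
have uQ : block_mx QA 0 0 QB \in unitmx by rewrite block_diag_mx_unit uQA uQB.
rewrite -(dvd_entries_equiv d _ uPB uQ) (row_mx_normal_form uPA EA EB) dvd_entries_row_mx.
rewrite -[_ *m diag2 e1 e2]mulmx1 (dvd_entries_equiv d _ uS (unitmx1 R 2)) !dvd_entries_diag2.
split=> [[[de1 _] [dd1 _]] | [de1 dd1]].
  by split.
by split; split; [| exact: rdvd_trans de1 he | | exact: rdvd_trans dd1 hd].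
Qed.

End MinorsInvariance.

Lemma gcd_minors_unique (R : idomainType) n (N : 'M[R]_(2, n)) g h :
  gcd_minors N g -> gcd_minors N h -> rassoc g h.
Proof. by move=> [dg gmax] [dh hmax]; apply: rdvd_anti; [apply: hmax | apply: gmax]. Qed.

Section NormalForm.

Variable R : idomainType.
Variables (S : 'M[R]_2) (e1 e2 d1 d2 l : R).
Hypotheses (e1_dvd_e2 : rdvd e1 e2) (d1_dvd_d2 : rdvd d1 d2) (lcm_l : is_lcm e1 d1 l).

Local Notation N0 := (row_mx (S *m diag2 e1 e2) (diag2 d1 d2)).

Lemma minor2_N0_lr0 i :
  minor2 N0 (lshift 2 i) (rshift 2 i0) = - (d1 * (S i1 i * (if i == i0 then e1 else e2))).
Proof.
rewrite minor2_row_mx_lr !diag2E.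
by case: (ord2P i) => ->; rewrite ?eq_i1_i0 ?eqxx ?mulmx_diag2_col0 ?mulmx_diag2_col1; ring.
Qed.

Lemma minor2_N0_lr1 i :
  minor2 N0 (lshift 2 i) (rshift 2 i1) = S i0 i * (if i == i0 then e1 else e2) * d2.
Proof.
rewrite minor2_row_mx_lr !diag2E.
by case: (ord2P i) => ->; rewrite ?eq_i1_i0 ?eqxx ?mulmx_diag2_col0 ?mulmx_diag2_col1; ring.
Qed.

Lemma det_N0_left : \det (S *m diag2 e1 e2) = \det S * (e1 * e2).
Proof. by rewrite det_mulmx [\det (diag2 _ _)]det2 !diag2E; ring. Qed.

Lemma dvd_minors_N0 h1 h2 :
  rdvd h1 e1 -> rdvd h1 d1 -> rdvd h2 e2 -> rdvd h2 d2 -> rdvd h2 (l * S i1 i0) ->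
  dvd_minors (h1 * h2) N0.
Proof.
move=> h1e1 h1d1 h2e2 h2d2 h2ls.
have h1e2 := rdvd_trans h1e1 e1_dvd_e2.
have h1d2 := rdvd_trans h1d1 d1_dvd_d2.
have h12_e1d1s : rdvd (h1 * h2) (e1 * d1 * S i1 i0).
  apply: rdvd_trans (rdvd_mul2 (rdvd_refl h1) h2ls) _.
  by rewrite mulrA; apply/rdvd_mul2/rdvd_refl/(gcd_mul_lcm_dvd h1e1 h1d1 lcm_l).
apply: dvd_minors_row_mx.
- by rewrite det_N0_left; apply/rdvd_mull/rdvd_mul2.
- by rewrite det2 !diag2E mulr0 subr0; apply: rdvd_mul2.
move=> i j; case: (ord2P j) => ->; [rewrite minor2_N0_lr0 | rewrite minor2_N0_lr1];
  case: (ord2P i) => ->; rewrite ?eq_i1_i0 ?eqxx.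
- by apply: rdvd_trans h12_e1d1s _; exists (-1); ring.
- by apply: rdvd_trans (rdvd_mul2 h1d1 h2e2) _; exists (- S i1 i1); ring.
- by apply: rdvd_trans (rdvd_mul2 h1e1 h2d2) _; exists (S i0 i0); ring.
- by apply: rdvd_trans (rdvd_mul2 h1e2 h2d2) _; exists (S i0 i1); ring.
Qed.

(* The entries of S^-1 provide the unimodular combinations that isolate the
   products d1 e2 and e1 d2 from the mixed minors. *)
Lemma dvd_minors_N0_dvd_comb x : S \in unitmx -> dvd_minors x N0 -> forall u v u' v' w',
  rdvd x ((e1 * u + d1 * v) * (e2 * u' + d2 * v' + l * S i1 i0 * w')).
Proof.
move=> uS dx u v u' v' w'.
have [[c Ee2] [[k Ed2] [[z Elz] [[y Ely] _]]]] := (e1_dvd_e2, (d1_dvd_d2, lcm_l)).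
have dx_l0 i : rdvd x (d1 * (S i1 i * (if i == i0 then e1 else e2))).
  by rewrite -[_ * _]opprK -minor2_N0_lr0; apply/rdvdN/dx.
have dx_l1 i : rdvd x (S i0 i * (if i == i0 then e1 else e2) * d2).
  by rewrite -minor2_N0_lr1.
have dx_d1s10e1 : rdvd x (d1 * (S i1 i0 * e1)) by have := dx_l0 i0; rewrite eqxx.
have dx_d1s11e2 : rdvd x (d1 * (S i1 i1 * e2)) by have := dx_l0 i1; rewrite eq_i1_i0.
have dx_s00e1d2 : rdvd x (S i0 i0 * e1 * d2) by have := dx_l1 i0; rewrite eqxx.
have dx_e1e2 : rdvd x (e1 * e2).
  have := dx (lshift 2 i0) (lshift 2 i1).
  rewrite minor2_row_mx_ll minor2_det det_N0_left => /(rdvd_mull (\det S)^-1).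
  by rewrite mulrA mulVr ?mul1r // -unitmxE.
have dx_d1d2 : rdvd x (d1 * d2).
  have := dx (rshift 2 i0) (rshift 2 i1).
  by rewrite minor2_row_mx_rr /minor2 !diag2E mulr0 subr0.
set T := invmx S.
have ST11 : S i1 i0 * T i0 i1 + S i1 i1 * T i1 i1 = 1.
  by have := congr1 (fun M : 'M[R]_2 => M i1 i1) (mulmxV uS); rewrite !mxE big_ord2 eqxx.
have TS00 : T i0 i0 * S i0 i0 + T i0 i1 * S i1 i0 = 1.
  by have := congr1 (fun M : 'M[R]_2 => M i0 i0) (mulVmx uS); rewrite !mxE big_ord2 eqxx.
have dx_d1e2 : rdvd x (d1 * e2).
  have := rdvd_lincomb (c * T i0 i1) (T i1 i1) dx_d1s10e1 dx_d1s11e2.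
  by congr (rdvd x _); rewrite -[d1 * e2]mulr1 -ST11 Ee2; ring.
have dx_e1d2 : rdvd x (e1 * d2).
  have := rdvd_lincomb (T i0 i0) (k * T i0 i1) dx_s00e1d2 dx_d1s10e1.
  by congr (rdvd x _); rewrite -[e1 * d2]mulr1 -TS00 Ed2; ring.
have dx_e1d1s : rdvd x (e1 * d1 * S i1 i0).
  by have := dx_d1s10e1; congr (rdvd x _); ring.
have El : (e1 * u + d1 * v) * l = e1 * d1 * (u * y + v * z).
  by rewrite mulrDl {1}Ely Elz; ring.
have -> : (e1 * u + d1 * v) * (e2 * u' + d2 * v' + l * S i1 i0 * w')
    = e1 * e2 * (u * u') + d1 * e2 * (v * u') + e1 * d2 * (u * v')
      + d1 * d2 * (v * v') + e1 * d1 * S i1 i0 * ((u * y + v * z) * w').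
  transitivity ((e1 * u + d1 * v) * e2 * u' + (e1 * u + d1 * v) * d2 * v'
                + (e1 * u + d1 * v) * l * S i1 i0 * w'); first by ring.
  by rewrite El; ring.
by repeat apply: rdvdD; apply: rdvd_mulr.
Qed.

End NormalForm.

Section ElementaryDivisorDomain.

Variable R : idomainType.
Hypothesis edd : elementary_divisor_domain R.

Lemma edd_bezout (a b : R) : exists g u v, is_gcd [:: a; b] g /\ g = a * u + b * v.
Proof.
pose M : 'M[R]_(1, 2) := \matrix_(i, j) (if j == i0 then a else b).
have [P [Q [uP [uQ [Goff _]]]]] := edd M.
set G := P *m M *m Q in Goff.
have G01 : G 0 i1 = 0 by apply: Goff; rewrite inordK.
have dvd_M d : dvd_entries d M <-> rdvd d a /\ rdvd d b.
  split=> [dM | [da db] i j].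
    by have := dM 0 i0; have := dM 0 i1; rewrite !mxE eq_i1_i0 eqxx.
  by rewrite mxE; case: (ord2P j) => ->; rewrite ?eq_i1_i0 ?eqxx.
have dvd_G d : dvd_entries d G <-> rdvd d (G 0 i0).
  split=> [dG | dG00 i j]; first exact: dG.
  by rewrite (ord1 i); case: (ord2P j) => ->; rewrite ?G01 //; apply: rdvd0.
have [G00a G00b] : rdvd (G 0 i0) a /\ rdvd (G 0 i0) b.
  by rewrite -dvd_M -(dvd_entries_equiv _ _ uP uQ) dvd_G; apply: rdvd_refl.
exists (G 0 i0), (P 0 0 * Q i0 i0), (P 0 0 * Q i1 i0); split.
  apply/is_gcd2P; split=> // d da db.
  by rewrite -dvd_G dvd_entries_equiv // dvd_M.
rewrite /G !mxE big_ord2 !mxE !big_ord1 !mxE eq_i1_i0 eqxx; ring.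
Qed.

Lemma is_gcd2_bezout (a b g : R) : is_gcd [:: a; b] g -> exists u v, g = a * u + b * v.
Proof.
move=> /is_gcd2P[_ _ gmax]; have [h [u [v [/is_gcd2P[ha hb _] Eh]]]] := edd_bezout a b.
by have [x ->] := gmax h ha hb; exists (u * x), (v * x); rewrite Eh; ring.
Qed.

Lemma is_gcd3_bezout (a b c h : R) : is_gcd [:: a; b; c] h ->
  exists u v w, h = a * u + b * v + c * w.
Proof.
move=> /is_gcd3P[_ _ _ hmax].
have [g [u [v [/is_gcd2P[ga gb _] Eg]]]] := edd_bezout a b.
have [g' [u' [v' [/is_gcd2P[g'g g'c _] Eg']]]] := edd_bezout g c.
have [x ->] := hmax g' (rdvd_trans g'g ga) (rdvd_trans g'g gb) g'c.
by exists (u * u' * x), (v * u' * x), (v' * x); rewrite Eg' Eg; ring.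
Qed.

Lemma gcd_minors_N0 (S : 'M[R]_2) e1 e2 d1 d2 l h1 h2 :
  S \in unitmx -> rdvd e1 e2 -> rdvd d1 d2 -> is_lcm e1 d1 l ->
  is_gcd [:: e1; d1] h1 -> is_gcd [:: e2; d2; l * S i1 i0] h2 ->
  gcd_minors (row_mx (S *m diag2 e1 e2) (diag2 d1 d2)) (h1 * h2).
Proof.
move=> uS he hd Hl Hh1 Hh2.
have [u [v Eh1]] := is_gcd2_bezout Hh1.
have [u' [v' [w' Eh2]]] := is_gcd3_bezout Hh2.
move: Hh1 Hh2 => /is_gcd2P[h1e1 h1d1 _] /is_gcd3P[h2e2 h2d2 h2ls _].
split=> [| x dx]; first by apply: (dvd_minors_N0 he hd Hl).
by have := dvd_minors_N0_dvd_comb he hd Hl uS dx u v u' v' w'; rewrite -Eh1 -Eh2.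
Qed.

Lemma gcd_minors_row_mx_normal (A B PA QA PB QB : 'M[R]_2) e1 e2 d1 d2 l h1 h2 :
  PA \in unitmx -> QA \in unitmx -> PB \in unitmx -> QB \in unitmx ->
  PA *m A *m QA = diag2 e1 e2 -> PB *m B *m QB = diag2 d1 d2 ->
  rdvd e1 e2 -> rdvd d1 d2 -> is_lcm e1 d1 l -> is_gcd [:: e1; d1] h1 ->
  is_gcd [:: e2; d2; l * entry21 (PB *m invmx PA)] h2 ->
  gcd_minors (row_mx A B) (h1 * h2).
Proof.
move=> uPA uQA uPB uQB EA EB he hd Hl Hh1 Hh2.
have uQ : block_mx QA 0 0 QB \in unitmx by rewrite block_diag_mx_unit uQA uQB.
apply: (gcd_minors_equiv uPB uQ); rewrite (row_mx_normal_form uPA EA EB).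
by apply: gcd_minors_N0 he hd Hl Hh1 Hh2; rewrite unitmx_mul uPB unitmx_inv.
Qed.

Lemma edd_left_factor m k (N : 'M[R]_(m, m + k)) :
  exists (D : 'M[R]_m) (X : 'M[R]_(m + k, m)) (Y : 'M[R]_(m, m + k)),
    D = N *m X /\ N = D *m Y.
Proof.
have [P [Q [uP [uQ [Goff _]]]]] := edd N.
set G := P *m N *m Q in Goff.
have G_r0 : rsubmx G = 0.
  apply/matrixP => i j; rewrite mxE [RHS]mxE; apply: Goff => /= Eij.
  by move: (ltn_ord i); rewrite Eij ltnNge leq_addr.
have EG : G = lsubmx G *m row_mx 1%:M 0 by rewrite mul_mx_row mulmx1 mulmx0 -G_r0 hsubmxK.
have EGl : lsubmx G = P *m (N *m lsubmx Q) by rewrite /G -mulmx_lsub mulmxA.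
exists (N *m lsubmx Q), (lsubmx Q), (row_mx 1%:M 0 *m invmx Q); split=> //.
rewrite {1}(unitmx_sandwich N uP uQ) -/G EG EGl.
by rewrite !mulmxA mulVmx // mul1mx.
Qed.

Lemma is_lgcd_mutual n (A B D : 'M[R]_n) : is_lgcd A B D ->
  exists X Y, D = row_mx A B *m X /\ row_mx A B = D *m Y.
Proof.
move=> [[A1 EA] [[B1 EB] Dmax]].
have [D0 [X [Y [ED0 EN]]]] := edd_left_factor (row_mx A B).
have [EA0 EB0] : A = D0 *m lsubmx Y /\ B = D0 *m rsubmx Y.
  by apply: eq_row_mx; rewrite -mul_mx_row hsubmxK.
have [Z EZ] : mx_ldvd D0 D by apply: Dmax; [exists (lsubmx Y) | exists (rsubmx Y)].
exists (X *m Z), (row_mx A1 B1); split; first by rewrite EZ ED0 mulmxA.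
by rewrite mul_mx_row -EA -EB.
Qed.

(* h1 | h2 makes h2 = 0 whenever h1 = 0, the one case in which the
   determinant does not determine the second invariant factor. *)
Lemma edd_equiv_diag2 (D : 'M[R]_2) h1 h2 : rdvd h1 h2 ->
  (forall d, dvd_entries d D <-> rdvd d h1) -> rassoc (h1 * h2) (\det D) ->
  mx_equiv D (diag2 h1 h2).
Proof.
move=> h12 dvd_D detD.
have [P [Q [uP [uQ [Goff Gdvd]]]]] := edd D.
set G := P *m D *m Q in Goff Gdvd.
have EG : G = diag2 (G i0 i0) (G i1 i1).
  apply/matrixP => i j; case: (ord2P i) => ->; case: (ord2P j) => ->;
    by rewrite !diag2E //; apply: Goff; rewrite !inordK.
have pq : rdvd (G i0 i0) (G i1 i1) by apply: Gdvd; rewrite ?inordK.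
have dvd_G d : dvd_entries d D <-> rdvd d (G i0 i0).
  rewrite -(dvd_entries_equiv d _ uP uQ) -/G EG dvd_entries_diag2 diag2_00.
  by split=> [[] | dp] //; split; last exact: rdvd_trans dp pq.
have h1p : rassoc h1 (G i0 i0).
  by apply: rdvd_anti; [rewrite -dvd_G dvd_D | rewrite -dvd_D dvd_G]; apply: rdvd_refl.
have h2q : rassoc h2 (G i1 i1).
  apply: rassoc_mul2l h12 (rdvd_trans (rassoc_rdvd h1p) pq) _.
  apply: rassoc_trans detD (rassoc_trans _ (rassoc_mul (rassoc_sym h1p) (rassoc_refl _))).
  exists (\det P * \det Q); split; first by rewrite unitrM -!unitmxE uP uQ.
  have detG : \det G = G i0 i0 * G i1 i1 by rewrite {1}EG det2 !diag2E mulr0 subr0.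
  by rewrite -detG /G !det_mulmx; ring.
apply: mx_equiv_trans (mx_equiv_diag2 (rassoc_sym h1p) (rassoc_sym h2q)).
by exists P, Q; rewrite -/G -EG.
Qed.

End ElementaryDivisorDomain.

Unset Implicit Arguments.

Theorem theorem2p15 (R : idomainType) (hR : elementary_divisor_domain R)
  (A B : 'M[R]_2) (e1 e2 d1 d2 : R)
  (he : rdvd e1 e2) (hd : rdvd d1 d2)
  (PA QA PB QB : 'M[R]_2)
  (hPA : PA \in unitmx) (hQA : QA \in unitmx)
  (hPB : PB \in unitmx) (hQB : QB \in unitmx)
  (hA : PA *m A *m QA = diag2 e1 e2)
  (hB : PB *m B *m QB = diag2 d1 d2) :
  (forall (PA' QA' PB' QB' : 'M[R]_2),
     PA' \in unitmx -> QA' \in unitmx -> PB' \in unitmx -> QB' \in unitmx ->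
     PA' *m A *m QA' = diag2 e1 e2 -> PB' *m B *m QB' = diag2 d1 d2 ->
     forall (g l g0 g' l' g0' : R),
       is_gcd [:: e2; d2] g -> is_lcm e1 d1 l ->
       is_gcd [:: g; entry21 (PB *m invmx PA) * l] g0 ->
       is_gcd [:: e2; d2] g' -> is_lcm e1 d1 l' ->
       is_gcd [:: g'; entry21 (PB' *m invmx PA') * l'] g0' ->
       rassoc g0 g0') /\
  (forall (D : 'M[R]_2) (h1 l h2 : R),
     is_lgcd A B D ->
     is_gcd [:: e1; d1] h1 -> is_lcm e1 d1 l ->
     is_gcd [:: e2; d2; l * entry21 (PB *m invmx PA)] h2 ->
     mx_equiv D (diag2 h1 h2)).
Proof.
split.
  move=> PA' QA' PB' QB' hPA' hQA' hPB' hQB' hA' hB' g l g0 g' l' g0' Hg Hl Hg0 Hg' Hl' Hg0'.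
  have [h1 [_ [_ [Hh1 _]]]] := edd_bezout hR e1 d1.
  rewrite [_ * l]mulrC in Hg0; rewrite [_ * l']mulrC in Hg0'.
  have {Hg Hg0}Hg0 := is_gcd_nested Hg Hg0.
  have {Hg' Hg0'}Hg0' := is_gcd_nested Hg' Hg0'.
  have N_h1g0 := gcd_minors_row_mx_normal hR hPA hQA hPB hQB hA hB he hd Hl Hh1 Hg0.
  have N_h1g0' := gcd_minors_row_mx_normal hR hPA' hQA' hPB' hQB' hA' hB' he hd Hl' Hh1 Hg0'.
  exact: rassoc_mul2l (gcd_dvd_invariant he hd Hl Hh1 Hg0)
    (gcd_dvd_invariant he hd Hl' Hh1 Hg0') (gcd_minors_unique N_h1g0 N_h1g0').
move=> D h1 l h2 HD Hh1 Hl Hh2.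
have [X [Y [ED EN]]] := is_lgcd_mutual hR HD.
have N_h1h2 := gcd_minors_row_mx_normal hR hPA hQA hPB hQB hA hB he hd Hl Hh1 Hh2.
apply: (edd_equiv_diag2 hR (gcd_dvd_invariant he hd Hl Hh1 Hh2)).
  move=> d; rewrite (dvd_entries_mutual d ED EN).
  by rewrite (dvd_entries_row_mx_normal d hPA hQA hPB hQB hA hB he hd) (is_gcd2_dvdP d Hh1).
exact: gcd_minors_unique N_h1h2 (gcd_minors_mutual ED EN).
Qed.
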